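(* Let $G$ be an uncountable Polish group. The following are equivalent: (1) every countable subset of $G$ is contained in a $G_\delta$ Haar null subset of $G$; (2) there exists a countable dense subset of $G$ that is contained in a $G_\delta$ Haar null subset of $G$; (3) $G$ can be written as the union of a meager set and a Haar null set.
   Context: A Polish group is a topological group whose topology is separable and completely metrizable. A set $A\subseteq G$ is Haar null if there are a Borel set $B\supseteq A$ and a Borel probability measure $\mu$ on $G$ with $\mu(gBh)=0$ for all $g,h\in G$. *)

From HB Require Import structures.
From mathcomp Require Import all_boot all_order all_algebra.
From mathcomp Require Import all_classical all_reals all_analysis borel_hierarchy.
From mathcomp Require Import Rstruct Rstruct_topology.

Set Implicit Arguments.
Unset Strict Implicit.
Unset Printing Implicit Defensive.

Import Order.TTheory GRing.Theory Num.Theory.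
Import numFieldNormedType.Exports.
Local Open Scope classical_set_scope.
Local Open Scope ring_scope.

Notation RR := Rdefinitions.R.

Section PolishGroups.
Context {T : ptopologicalType}.

Definition topological_group (mul : T -> T -> T) (inv : T -> T) (e : T) : Prop :=
  [/\ (forall x y z, mul x (mul y z) = mul (mul x y) z),
      (forall x, mul e x = x /\ mul x e = x),
      (forall x, mul (inv x) x = e /\ mul x (inv x) = e),
      continuous (fun p : T * T => mul p.1 p.2)
    & continuous inv].

Definition separable_space : Prop :=
  exists D : set T, countable D /\ dense D.

Definition is_metric (d : T -> T -> RR) : Prop :=
  [/\ (forall x y, d x y = 0 <-> x = y),
      (forall x y, d x y = d y x)
    & (forall x y z, d x z <= d x y + d y z)].

Definition dball (d : T -> T -> RR) (x : T) (r : RR) : set T :=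
  [set y | d x y < r].

Definition completely_metrizable : Prop :=
  exists d : T -> T -> RR,
    [/\ is_metric d,
        (forall A : set T, open A <->
           (forall x, A x -> exists2 r : RR, 0 < r & dball d x r `<=` A))
      & (forall u : nat -> T,
           (forall eps : RR, 0 < eps -> exists N : nat,
              forall m n : nat, leq N m -> leq N n -> d (u m) (u n) < eps) ->
           exists x : T, u @ \oo --> x)].

Definition polish_space : Prop := separable_space /\ completely_metrizable.

Definition polish_group (mul : T -> T -> T) (inv : T -> T) (e : T) : Prop :=
  topological_group mul inv e /\ polish_space.

Definition borel_set (B : set T) : Prop := <<s @open T >> B.

Definition haar_null (mul : T -> T -> T) (A : set T) : Prop :=
  exists B : set T, [/\ borel_set B, A `<=` B &
    exists mu : probability (g_sigma_algebraType (@open T)) RR,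
      forall g h : T, mu [set mul (mul g b) h | b in B] = 0%E].

Definition nowhere_dense (S : set T) : Prop := interior (closure S) = set0.

Definition meager (M : set T) : Prop :=
  exists F : (set T)^nat, (forall n, nowhere_dense (F n)) /\
    M `<=` \bigcup_n F n.

End PolishGroups.

From HB Require Import structures.
From mathcomp Require Import all_boot all_order all_algebra.
From mathcomp Require Import all_classical all_reals all_analysis borel_hierarchy.
From mathcomp Require Import lra Rstruct.

(* (1) -> (2) is witnessed by any countable dense set.  (2) -> (3): a dense
   G_delta set H has a meager complement, so G = ~` H \/ H.  (3) -> (1): if
   G = M \/ N, the complement of the meager set M contains a dense G_delta set
   U = \bigcap_n U_n, which is Haar null as U `<=` N.  Given a countable set C,
   the Baire category theorem yields x with x c in U_n for all n and all c in C
   (countably many dense open conditions U_n c^-1), so C lies in the G_delta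
   Haar null set x^-1 U. *)

Set Implicit Arguments.
Unset Strict Implicit.
Unset Printing Implicit Defensive.

Import Order.TTheory GRing.Theory Num.Theory.
Local Open Scope classical_set_scope.

Definition baire_space (T : topologicalType) : Prop :=
  forall F : (set T)^nat, (forall i, open (F i) /\ dense (F i)) ->
    dense (\bigcap_i F i).

Section Topology.
Context {T : ptopologicalType}.

Lemma dense_subset (A B : set T) : A `<=` B -> dense A -> dense B.
Proof.
move=> AB dA O O0 oO; have [x [Ox Ax]] := dA O O0 oO.
by exists x; split; last exact: AB.
Qed.

Lemma dense_nonempty (A : set T) : dense A -> A !=set0.
Proof. by move=> dA; have [x [_ Ax]] := dA setT (ex_intro _ point I) openT; exists x. Qed.

Lemma nowhere_dense_setC (U : set T) : open U -> dense U -> nowhere_dense (~` U).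
Proof.
move=> oU dU; rewrite /nowhere_dense -(proj1 (closure_id _) (open_closedC oU)).
apply/seteqP; split=> // x Ix.
have [y [Iy Uy]] := dU _ (ex_intro _ x Ix) (@open_interior _ _).
exact: interior_subset Iy Uy.
Qed.

Lemma dense_setC_closure (F : set T) : nowhere_dense F -> dense (~` closure F).
Proof.
move=> nF O [x Ox] oO; apply: contrapT => nO.
have OF : O `<=` closure F by move=> y Oy; apply: contrapT => nFy; apply: nO; exists y.
have : (closure F)° x by apply: (interiorS OF); rewrite (proj1 (interior_id O) oO).
by rewrite nF.
Qed.

Lemma meager_setC_Gdelta (H : set T) : Gdelta H -> dense H -> meager (~` H).
Proof.
move=> [F oF ->] dH; exists (fun n => ~` F n); split; last by rewrite setC_bigcap.
move=> n; apply: nowhere_dense_setC (oF n) _.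
by apply: dense_subset dH => x; apply.
Qed.

Lemma dense_Gdelta_sub_setC_meager (M : set T) : meager M ->
  exists2 U : (set T)^nat, (forall n, open (U n) /\ dense (U n)) &
    \bigcap_n U n `<=` ~` M.
Proof.
move=> [F [nF MF]]; exists (fun n => ~` closure (F n)).
  by move=> n; split; [exact/closed_openC/closed_closure|exact: dense_setC_closure].
move=> x Ux Mx; have [n _ Fnx] := MF x Mx.
exact: Ux n I (subset_closure Fnx).
Qed.

Lemma baire_space_countable (K : countType) (F : K -> set T) : baire_space T ->
  (forall i, open (F i) /\ dense (F i)) -> dense (\bigcap_i F i).
Proof.
move=> baireT FP; pose G k := if unpickle k is Some i then F i else setT.
have GP k : open (G k) /\ dense (G k).
  rewrite /G; case: (unpickle k) => [i|] //.
  by split=> [|O O0 _]; [exact: openT|rewrite setIT].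
apply: dense_subset (baireT G GP) => x Gx i _.
by have := Gx (pickle i) I; rewrite /G pickleK.
Qed.

Lemma Gdelta_preimage (U : topologicalType) (f : T -> U) (H : set U) :
  continuous f -> Gdelta H -> Gdelta (f @^-1` H).
Proof.
move=> /continuousP fc [F oF ->].
by exists (fun i => f @^-1` F i) => [i|]; [exact: fc|rewrite preimage_bigcap].
Qed.

Lemma borel_set_preimage (U : ptopologicalType) (f : T -> U) (B : set U) :
  continuous f -> borel_set B -> borel_set (f @^-1` B).
Proof.
move=> /continuousP fc.
have : <<s @open U >> `<=` image_set_system setT f <<s @open T >>.
  apply: smallest_sub; first by apply: sigma_algebra_image; exact: smallest_sigma_algebra.
  by move=> A oA; rewrite /image_set_system /= setTI; apply: sub_sigma_algebra; exact: fc.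
by move=> sub /sub; rewrite /image_set_system /= setTI.
Qed.

Lemma haar_null_subset (mul : T -> T -> T) (A N : set T) :
  A `<=` N -> haar_null mul N -> haar_null mul A.
Proof. by move=> AN [B [bB NB muB]]; exists B; split=> //; exact: subset_trans NB. Qed.

End Topology.

Section CompleteMetric.
Local Open Scope ring_scope.
Variables (T : ptopologicalType) (d : T -> T -> RR).
Hypothesis d_metric : is_metric d.
Hypothesis open_dballP : forall A : set T, open A <->
  (forall x, A x -> exists2 r : RR, 0 < r & dball d x r `<=` A).
Hypothesis d_complete : forall u : nat -> T,
  (forall eps : RR, 0 < eps -> exists N : nat,
     forall m n : nat, leq N m -> leq N n -> d (u m) (u n) < eps) ->
  exists x : T, u @ \oo --> x.

Lemma dball_center x r : 0 < r -> dball d x r x.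
Proof. by case: d_metric => d0 _ _ r_gt0; rewrite /dball /= (proj2 (d0 x x) erefl). Qed.

Lemma dball_open x r : open (dball d x r).
Proof.
case: d_metric => _ _ tri; apply/open_dballP => y xy.
exists (r - d x y); first by rewrite subr_gt0.
by move=> z yz; rewrite /dball /= in xy yz *; have := tri x y z; lra.
Qed.

Lemma cvg_dball (u : nat -> T) x eps : u @ \oo --> x -> 0 < eps ->
  exists N, forall n, (N <= n)%N -> d x (u n) < eps.
Proof.
move=> ux eps_gt0.
have : nbhs x (dball d x eps).
  by apply: open_nbhs_nbhs; split; [exact: dball_open|exact: dball_center].
by move=> /ux[N _ HN]; exists N.
Qed.

Lemma nested_dball_limit (c : nat -> T) (r : nat -> RR) :
  (forall k m, (k <= m)%N -> d (c k) (c m) < r k) ->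
  (forall eps, 0 < eps -> exists N, r N < eps) ->
  exists x, forall k, d (c k) x <= r k.
Proof.
case: d_metric => _ dC tri c_nested r_small.
have /d_complete[x cx] : forall eps : RR, 0 < eps -> exists N : nat,
    forall m n, (N <= m)%N -> (N <= n)%N -> d (c m) (c n) < eps.
  move=> eps eps_gt0.
  have [N rN] := r_small (eps / 2) (divr_gt0 eps_gt0 (ltr0Sn _ 1)).
  exists N => m n Nm Nn; have := tri (c m) (c N) (c n).
  by have := c_nested _ _ Nm; have := c_nested _ _ Nn; rewrite (dC (c m) (c N)); lra.
exists x => k; apply/ler_addgt0Pr => eps eps_gt0.
have [N cN] := cvg_dball cx eps_gt0; pose m := maxn N k.
have := tri (c k) (c m) x; have := c_nested k m (leq_maxr N k).
by have := cN m (leq_maxl N k); rewrite (dC x); lra.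
Qed.

Lemma dense_open_dball (W : set T) x r (k : nat) : open W -> dense W -> 0 < r ->
  exists y s, [/\ 0 < s, s <= k.+1%:R^-1 & dball d y (2 * s) `<=` W `&` dball d x r].
Proof.
move=> oW dW r_gt0.
have [y [xy Wy]] := dW _ (ex_intro _ x (dball_center x r_gt0)) (dball_open x r).
have [t t_gt0 tW] := proj1 (open_dballP _) (openI oW (dball_open x r)) y (conj Wy xy).
have k_gt0 : 0 < k.+1%:R^-1 :> RR by rewrite invr_gt0 ltr0Sn.
exists y, (Num.min (t / 2) k.+1%:R^-1); split.
- by rewrite lt_min k_gt0 andbT divr_gt0.
- by rewrite ge_min lexx orbT.
- move=> z yz; apply: tW; rewrite /dball /= in yz *.
  have : Num.min (t / 2) k.+1%:R^-1 <= t / 2 by rewrite ge_min lexx.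
  lra.
Qed.

(* Inside a ball B(c_0, r_0) \subset O choose balls with
   B(c_{k+1}, 2 r_{k+1}) \subset W_k \cap B(c_k, r_k) and r_{k+1} <= 1/(k+1);
   the limit x of the centres satisfies d(c_k, x) <= r_k < 2 r_k, so it lies
   in O and in every W_k. *)
Theorem complete_metric_baire : baire_space T.
Proof.
move=> W WP O [x0 Ox0] oO.
have [r0 r0_gt0 r0O] := proj1 (open_dballP O) oO x0 Ox0.
have step (kp : nat * (T * RR)) : exists q : T * RR, 0 < kp.2.2 ->
    [/\ 0 < q.2, q.2 <= kp.1.+1%:R^-1 &
        dball d q.1 (2 * q.2) `<=` W kp.1 `&` dball d kp.2.1 kp.2.2].
  case: kp => k [x r] /=; have [r_gt0|_] := ltP 0 r; last by exists (x, r).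
  have [y [s]] := dense_open_dball x k (WP k).1 (WP k).2 r_gt0.
  by exists (y, s).
have [f f_spec] := choice step.
pose c k := iteri k (fun k p => f (k, p)) (x0, r0).
have c_gt0 k : 0 < (c k).2.
  by elim: k => [|k IH] //; have [] := f_spec (k, c k) IH.
have c_spec k : [/\ 0 < (c k.+1).2, (c k.+1).2 <= k.+1%:R^-1 &
    dball d (c k.+1).1 (2 * (c k.+1).2) `<=` W k `&` dball d (c k).1 (c k).2].
  exact: f_spec (k, c k) (c_gt0 k).
have c_dec :
    {homo (fun k => dball d (c k).1 (c k).2) : k m / (k <= m)%N >-> m `<=` k}.
  apply: homo_leq => [A|B A C AB BC|i]; [by []|exact: subset_trans BC AB|].
  move=> z iz; have [_ _ sub] := c_spec i.
  have /sub[] // : dball d (c i.+1).1 (2 * (c i.+1).2) z.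
  by rewrite /dball /= in iz *; have := c_gt0 i.+1; lra.
have c_nested k m : (k <= m)%N -> d (c k).1 (c m).1 < (c k).2.
  by move=> km; apply: c_dec km _ (dball_center _ (c_gt0 m)).
have c_small eps : 0 < eps -> exists N, (c N).2 < eps.
  move=> eps_gt0; have [n _ Hn] := near_infty_natSinv_lt (PosNum eps_gt0).
  by exists n.+1; have [_ ? _] := c_spec n; exact: le_lt_trans (Hn n (leqnn n)).
have [x cx] := nested_dball_limit c_nested c_small.
have x_in k : (W k `&` dball d (c k).1 (c k).2) x.
  have [_ _ sub] := c_spec k; apply: sub; rewrite /dball /=.
  by have := cx k.+1; have := c_gt0 k.+1; lra.
by exists x; split; [exact/r0O/(x_in 0%N).2|move=> k _; exact: (x_in k).1].
Qed.

End CompleteMetric.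

Section TopologicalGroup.
Variables (T : ptopologicalType) (mul : T -> T -> T) (inv : T -> T) (e : T).
Hypothesis T_group : topological_group mul inv e.

Let mulgA : associative mul. Proof. by case: T_group. Qed.
Let mul1g x : mul e x = x. Proof. by case: T_group => _ /(_ x)[]. Qed.
Let mulg1 x : mul x e = x. Proof. by case: T_group => _ /(_ x)[]. Qed.
Let mulVg x : mul (inv x) x = e. Proof. by case: T_group => _ _ /(_ x)[]. Qed.
Let mulgV x : mul x (inv x) = e. Proof. by case: T_group => _ _ /(_ x)[]. Qed.

Lemma continuous_mull a : continuous (mul a).
Proof.
case: T_group => _ _ _ mulC _ x.
exact: (@continuous2_cvg _ T T T _ _ (fun=> a) id mul a x (mulC (a, x)) (cvg_cst _) cvg_id).
Qed.

Lemma continuous_mulr a : continuous (mul^~ a).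
Proof.
case: T_group => _ _ _ mulC _ x.
exact: (@continuous2_cvg _ T T T _ _ id (fun=> a) mul x a (mulC (x, a)) cvg_id (cvg_cst _)).
Qed.

Lemma dense_mulr_preimage a (U : set T) : dense U -> dense (mul^~ a @^-1` U).
Proof.
move=> dU O [x Ox] oO.
have oO' : open (mul^~ (inv a) @^-1` O).
  by apply: open_comp => // z _; exact: continuous_mulr.
have [z [Oz Uz]] : (mul^~ (inv a) @^-1` O) `&` U !=set0.
  by apply: dU oO'; exists (mul x a); rewrite /= -mulgA mulgV mulg1.
by exists (mul z (inv a)); split=> //=; rewrite -mulgA mulVg mulg1.
Qed.

Lemma haar_null_mull_preimage a (N : set T) :
  haar_null mul N -> haar_null mul (mul a @^-1` N).
Proof.
move=> [B [bB NB [mu muB]]]; exists (mul a @^-1` B); split.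
- exact: borel_set_preimage (@continuous_mull a) bB.
- by move=> x /NB.
exists mu => g h; rewrite -(muB (mul g (inv a)) h); congr (mu _).
apply/seteqP; split=> _ [b Bb <-].
  by exists (mul a b) => //; rewrite -(mulgA g) (mulgA (inv a)) mulVg mul1g.
by exists (mul (inv a) b); rewrite /= ?mulgA ?mulgV ?mul1g.
Qed.

Lemma countable_sub_Gdelta_haar_null (M N C : set T) : baire_space T ->
  meager M -> haar_null mul N -> M `|` N = setT -> countable C ->
  exists H, [/\ Gdelta H, haar_null mul H & C `<=` H].
Proof.
move=> baireT /dense_Gdelta_sub_setC_meager[U UP UM] hN MN /pcard_surjP[g Cg].
pose W (nj : nat * nat) := mul^~ (g nj.2) @^-1` U nj.1.
have WP nj : open (W nj) /\ dense (W nj).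
  split; last exact/dense_mulr_preimage/(UP _).2.
  by apply: open_comp (UP _).1 => z _; exact: continuous_mulr.
have [x Wx] := dense_nonempty (baire_space_countable baireT WP).
exists (mul x @^-1` \bigcap_n U n); split.
- apply: Gdelta_preimage (@continuous_mull x) _.
  by exists U => // n; exact: (UP n).1.
- apply/haar_null_mull_preimage/(haar_null_subset _ hN) => y /UM My.
  have : (M `|` N) y by rewrite MN.
  by case.
- by move=> _ /Cg[j _ <-] n _; exact: (Wx (n, j) I).
Qed.

End TopologicalGroup.

Theorem theorem5p34 (T : ptopologicalType) (mul : T -> T -> T) (inv : T -> T) (e : T) :
  polish_group mul inv e ->
  ~ countable [set: T] ->
  let P1 := forall C : set T, countable C ->
              exists H : set T, [/\ Gdelta H, haar_null mul H & C `<=` H] in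
  let P2 := exists D : set T, [/\ countable D, dense D &
              exists H : set T, [/\ Gdelta H, haar_null mul H & D `<=` H]] in
  let P3 := exists M N : set T, [/\ meager M, haar_null mul N & M `|` N = setT] in
  (P1 <-> P2) /\ (P2 <-> P3).
Proof.
move=> [T_group [[D [cD dD]] [d [d_metric d_open d_complete]]]] _ P1 P2 P3.
have baireT := complete_metric_baire d_metric d_open d_complete.
have P12 : P1 -> P2 by move=> P1C; exists D; split=> //; exact: P1C.
have P23 : P2 -> P3.
  move=> [D' [_ dD' [H [gH hH D'H]]]]; exists (~` H), H; split=> //; last exact: setvU.
  exact/meager_setC_Gdelta/(dense_subset D'H).
have P31 : P3 -> P1.
  move=> [M [N [mM hN MN]]] C.
  exact: (countable_sub_Gdelta_haar_null T_group baireT mM hN MN).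
by split; [split=> [/P12|/P23/P31]|split=> [/P23|/P31/P12]].
Qed.
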